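(* $\mathcal{H}^3=\left\{a+b\mathbf{j}\in\mathbb{D} : |a|+|b|\leq \frac{2}{3\sqrt{3}}\right\}$. In particular $\mathcal{H}^3$ is a square centered at the origin with side length $\frac{2\sqrt{2}}{3\sqrt{3}}$.
   Context: The hyperbolic numbers are $\mathbb{D}=\{a+b\mathbf{j} : a,b\in\mathbb{R}\}$ with $\mathbf{j}^2=1$, $\mathbf{j}\notin\mathbb{R}$, a commutative real algebra identified with $\mathbb{R}^2$ via $a+b\mathbf{j}\leftrightarrow(a,b)$, with the Euclidean norm. For $c\in\mathbb{D}$, $Q_{3,c}(z)=z^3+c$ on $\mathbb{D}$, $Q_{3,c}^m$ its $m$-fold iterate, and $\mathcal{H}^3=\{c\in\mathbb{D} : (Q_{3,c}^m(0))_{m\geq1}\text{ is bounded}\}$. *)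

From Stdlib Require Import Reals.
Open Scope R_scope.

(* a + b j  is represented as the pair (a, b) *)
Definition hyp : Type := (R * R)%type.

Definition hyp_add (z w : hyp) : hyp := (fst z + fst w, snd z + snd w).
(* (a + b j)(c + d j) = (ac + bd) + (ad + bc) j, since j^2 = 1 *)
Definition hyp_mul (z w : hyp) : hyp :=
  (fst z * fst w + snd z * snd w, fst z * snd w + snd z * fst w).

Definition hyp_norm (z : hyp) : R := sqrt (fst z * fst z + snd z * snd z).

Definition hyp_zero : hyp := (0, 0).

Definition Q3 (c z : hyp) : hyp := hyp_add (hyp_mul z (hyp_mul z z)) c.

Fixpoint Q3_iter (c : hyp) (m : nat) (z : hyp) : hyp :=
  match m with
  | O => z
  | S k => Q3 c (Q3_iter c k z)
  end.

Definition in_H3 (c : hyp) : Prop :=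
  exists M : R, forall m : nat, (1 <= m)%nat -> hyp_norm (Q3_iter c m hyp_zero) <= M.

Definition hyp_dist (z w : hyp) : R :=
  hyp_norm (fst z - fst w, snd z - snd w).

(* In the idempotent coordinates u = a + b, v = a - b the hyperbolic product is
   componentwise, so the orbit of 0 under z^3 + (a + bj) splits into the real
   orbits of 0 under x^3 + (a + b) and x^3 + (a - b).  The real orbit is bounded
   exactly when |c| <= r := 2/(3 sqrt 3): then [-3r/2, 3r/2] is invariant, while
   for c > r the map gains at least c - r per step, because
   x^3 - x + r = (x - 3r/2)^2 (x + 3r) >= 0 for x >= 0.  Finally |u|, |v| <= r
   iff |a| + |b| <= r. *)
From Stdlib Require Import Reals Lra Psatz.
Open Scope R_scope.

Fixpoint cube_iter (c : R) (n : nat) : R :=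
  match n with
  | O => 0
  | S k => cube_iter c k ^ 3 + c
  end.

Definition bounded_seq (u : nat -> R) : Prop := exists M, forall n, Rabs (u n) <= M.

Lemma cube_iter_opp c n : cube_iter (- c) n = - cube_iter c n.
Proof. induction n as [|n IH]; simpl; [ring | rewrite IH; ring]. Qed.

Lemma Q3_iter_zero_idempotent a b n :
  let z := Q3_iter (a, b) n hyp_zero in
  fst z + snd z = cube_iter (a + b) n /\ fst z - snd z = cube_iter (a - b) n.
Proof.
  induction n as [|n [IHu IHv]]; simpl in *.
  - split; ring.
  - rewrite <- IHu, <- IHv; unfold Q3, hyp_add, hyp_mul; simpl; split; ring.
Qed.

Lemma Rabs_add_Rabs_max x y : Rabs x + Rabs y = Rmax (Rabs (x + y)) (Rabs (x - y)).
Proof.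
  unfold Rmax, Rabs.
  destruct (Rcase_abs x), (Rcase_abs y), (Rcase_abs (x + y)), (Rcase_abs (x - y)),
    (Rle_dec _ _); lra.
Qed.

Lemma Rabs_add_Rabs_le_iff x y r :
  Rabs x + Rabs y <= r <-> Rabs (x + y) <= r /\ Rabs (x - y) <= r.
Proof.
  rewrite Rabs_add_Rabs_max; unfold Rmax.
  destruct (Rle_dec _ _); split; intros; try split; lra.
Qed.

Lemma Rabs_fst_le_hyp_norm z : Rabs (fst z) <= hyp_norm z.
Proof.
  unfold hyp_norm; rewrite <- sqrt_Rsqr_abs; apply sqrt_le_1_alt; unfold Rsqr; nra.
Qed.

Lemma Rabs_snd_le_hyp_norm z : Rabs (snd z) <= hyp_norm z.
Proof.
  unfold hyp_norm; rewrite <- sqrt_Rsqr_abs; apply sqrt_le_1_alt; unfold Rsqr; nra.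
Qed.

Lemma hyp_norm_le_Rabs_add z : hyp_norm z <= Rabs (fst z) + Rabs (snd z).
Proof.
  unfold hyp_norm.
  assert (Hx := Rabs_pos (fst z)); assert (Hy := Rabs_pos (snd z)).
  rewrite <- (sqrt_square (Rabs (fst z) + Rabs (snd z))) by lra.
  apply sqrt_le_1_alt.
  assert (Ex := Rsqr_abs (fst z)); assert (Ey := Rsqr_abs (snd z)).
  unfold Rsqr in *; nra.
Qed.

Lemma hyp_seq_bounded_iff (z : nat -> hyp) (u v : nat -> R) :
  (forall n, fst (z n) + snd (z n) = u n) ->
  (forall n, fst (z n) - snd (z n) = v n) ->
  (exists M, forall n, hyp_norm (z n) <= M) <-> bounded_seq u /\ bounded_seq v.
Proof.
  intros Hu Hv; split.
  - intros [M HM].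
    assert (Hsum : forall n, Rabs (u n) <= 2 * M /\ Rabs (v n) <= 2 * M).
    { intro n; rewrite <- Hu, <- Hv; apply Rabs_add_Rabs_le_iff.
      assert (Hx := Rabs_fst_le_hyp_norm (z n)).
      assert (Hy := Rabs_snd_le_hyp_norm (z n)).
      specialize (HM n); lra. }
    split; exists (2 * M); intro n; apply Hsum.
  - intros [[Mu HMu] [Mv HMv]]; exists (Mu + Mv); intro n.
    apply Rle_trans with (1 := hyp_norm_le_Rabs_add (z n)).
    rewrite Rabs_add_Rabs_max, Hu, Hv.
    specialize (HMu n); specialize (HMv n).
    apply Rmax_lub; pose proof (Rabs_pos (u n)); pose proof (Rabs_pos (v n)); lra.
Qed.

Lemma in_H3_iff_orbit_bounded c :
  in_H3 c <-> exists M, forall m, hyp_norm (Q3_iter c m hyp_zero) <= M.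
Proof.
  split.
  - intros [M HM]; exists (Rmax M 0); intros [|m].
    + unfold hyp_norm, hyp_zero; simpl.
      replace (0 * 0 + 0 * 0) with 0 by ring; rewrite sqrt_0; apply Rmax_r.
    + apply Rle_trans with M; [apply HM; lia | apply Rmax_l].
  - intros [M HM]; exists M; intros m _; apply HM.
Qed.

Section CubeOrbit.

Variable r : R.
Hypothesis r_pos : 0 < r.
Hypothesis r_sq : 27 * (r * r) = 4.

Lemma cube_iter_le_crit c n : Rabs c <= r -> Rabs (cube_iter c n) <= 3 * r / 2.
Proof.
  intro Hc; induction n as [|n IH]; cbn [cube_iter].
  - rewrite Rabs_R0; lra.
  - set (x := cube_iter c n) in *.
    assert (Hcube : Rabs (x ^ 3) <= r / 2).
    { rewrite <- RPow_abs.
      replace (r / 2) with ((3 * r / 2) ^ 3)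
        by (replace ((3 * r / 2) ^ 3) with (r * (27 * (r * r)) / 8) by field;
            rewrite r_sq; field).
      apply pow_incr; split; [apply Rabs_pos | exact IH]. }
    apply Rle_trans with (1 := Rabs_triang _ _); lra.
Qed.

Lemma cube_iter_ge_linear c n : r < c -> INR n * (c - r) <= cube_iter c n.
Proof.
  intro Hc; induction n as [|n IH].
  - simpl; lra.
  - rewrite S_INR; simpl cube_iter; set (x := cube_iter c n) in *.
    assert (Hx : 0 <= x) by (pose proof (pos_INR n); nra).
    assert (Hfact : (x - 3 * r / 2) ^ 2 * (x + 3 * r) = x ^ 3 - x + r).
    { transitivity (x ^ 3 - 27 * (r * r) / 4 * x + r * (27 * (r * r)) / 4);
        [field | rewrite r_sq; field]. }
    assert (0 <= (x - 3 * r / 2) ^ 2 * (x + 3 * r))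
      by (apply Rmult_le_pos; [apply pow2_ge_0 | lra]).
    lra.
Qed.

Lemma cube_iter_unbounded c : r < Rabs c -> ~ bounded_seq (cube_iter c).
Proof.
  assert (Hpos : forall c', r < c' -> ~ bounded_seq (cube_iter c')).
  { intros c' Hc' [M HM].
    destruct (INR_archimed (c' - r) M) as [n Hn]; [lra |].
    assert (Hlin := cube_iter_ge_linear c' n Hc').
    assert (HMn := Rle_trans _ _ _ (Rle_abs _) (HM n)); lra. }
  intros Hc Hb; destruct (Rle_dec 0 c) as [Hc0 | Hc0].
  - rewrite Rabs_pos_eq in Hc by lra; exact (Hpos c Hc Hb).
  - rewrite Rabs_left in Hc by lra; apply (Hpos (- c) Hc).
    destruct Hb as [M HM]; exists M; intro n.
    rewrite cube_iter_opp, Rabs_Ropp; apply HM.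
Qed.

Lemma cube_iter_bounded_iff c : bounded_seq (cube_iter c) <-> Rabs c <= r.
Proof.
  split.
  - intro Hb; destruct (Rle_dec (Rabs c) r) as [Hle | Hgt]; [exact Hle |].
    exfalso; apply (cube_iter_unbounded c); [lra | exact Hb].
  - intro Hc; exists (3 * r / 2); intro n; exact (cube_iter_le_crit c n Hc).
Qed.

End CubeOrbit.

Lemma in_H3_iff_cube_orbits a b :
  in_H3 (a, b) <-> bounded_seq (cube_iter (a + b)) /\ bounded_seq (cube_iter (a - b)).
Proof.
  rewrite in_H3_iff_orbit_bounded.
  apply hyp_seq_bounded_iff; intro n; apply (Q3_iter_zero_idempotent a b n).
Qed.

Lemma crit_pos : 0 < 2 / (3 * sqrt 3).
Proof.
  assert (0 < sqrt 3) by (apply sqrt_lt_R0; lra).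
  apply Rdiv_lt_0_compat; lra.
Qed.

Lemma crit_sq : 27 * (2 / (3 * sqrt 3) * (2 / (3 * sqrt 3))) = 4.
Proof.
  assert (0 < sqrt 3) by (apply sqrt_lt_R0; lra).
  assert (Hsq : sqrt 3 * sqrt 3 = 3) by (apply sqrt_sqrt; lra).
  replace (2 / (3 * sqrt 3) * (2 / (3 * sqrt 3))) with (4 / (9 * (sqrt 3 * sqrt 3)))
    by (field; lra).
  rewrite Hsq; field.
Qed.

Lemma hyp_dist_axis_points r : 0 <= r -> hyp_dist (r, 0) (0, r) = sqrt 2 * r.
Proof.
  intro Hr; unfold hyp_dist, hyp_norm; simpl.
  replace ((r - 0) * (r - 0) + (0 - r) * (0 - r)) with (2 * (r * r)) by ring.
  rewrite sqrt_mult_alt, sqrt_square by lra; reflexivity.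
Qed.

Theorem mainTheorem10 :
  (forall a b : R,
      in_H3 (a, b) <-> Rabs a + Rabs b <= 2 / (3 * sqrt 3)) /\
  (* the square has vertices (±r,0),(0,±r), r = 2/(3√3); side length: *)
  hyp_dist (2 / (3 * sqrt 3), 0) (0, 2 / (3 * sqrt 3))
    = 2 * sqrt 2 / (3 * sqrt 3).
Proof.
  assert (Hcrit := cube_iter_bounded_iff _ crit_pos crit_sq).
  split.
  - intros a b.
    rewrite in_H3_iff_cube_orbits, Rabs_add_Rabs_le_iff, !Hcrit; reflexivity.
  - rewrite hyp_dist_axis_points by (apply Rlt_le, crit_pos).
    unfold Rdiv; ring.
Qed.
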